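(* Let $M\subseteq\mathbb{N}$ and let $L$ be the class of all partial functions from $\mathbb{N}^k$ to $\mathbb{N}$ (all arities $k\ge1$) whose graphs are enumeration reducible to $M$. Assume $L$ satisfies: (1) $L$ contains all partial recursive functions and is closed under substitution, primitive recursion and the $\mu$-operator; (2) for every unary function $f\in L$ there exist a set $R\subseteq\mathbb{N}$ and unary functions $\alpha,\omega\in L$ whose domains contain $R$, such that the indicator function of $R$ belongs to $L$, and for all $x,y$, $f(x)$ is defined and equals $y$ iff there is $m\in R$ with $\alpha(m)=x$ and $\omega(m)=y$; (3) there exists a binary function $F\in L$ such that for every unary $f\in L$ there is $n$ with $F(n,\cdot)=f$. Then there exists a set $S\subseteq\mathbb{N}$ such that $M$ is enumeration equivalent to $S\oplus\overline{S}$, i.e., $M$ is enumeration reducible to $S\oplus\overline S$ and $S\oplus\overline S$ is enumeration reducible to $M$.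
   Context: Fix a standard recursive bijective encoding of tuples of natural numbers by natural numbers. The graph of a partial function $g:\mathbb{N}^k\to\mathbb{N}$ is the set of codes of tuples $(x_1,\dots,x_k,y)$ with $g(x_1,\dots,x_k)=y$. For $X,Y\subseteq\mathbb{N}$, $X$ is enumeration reducible to $Y$ if there is a recursively enumerable set $W$ of pairs $(x,u)$ such that $x\in X$ iff there is $u$ with $(x,u)\in W$ and $D_u\subseteq Y$, where $D_u$ is the finite set with canonical index $u$. $\overline S=\mathbb{N}\setminus S$, and $A\oplus B=\{2n\mid n\in A\}\cup\{2n+1\mid n\in B\}$. *)

From mathcomp Require Import all_boot.

Set Implicit Arguments.
Unset Strict Implicit.
Unset Printing Implicit Defensive.

Definition cpair (x y : nat) : nat := ((x + y) * (x + y).+1) %/ 2 + y.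

(* Code of a nonempty tuple (x_1, ..., x_n): iterated Cantor pairing,
   code [x] = x and code (x :: xs) = cpair x (code xs).  For each fixed
   length n >= 1 this is a recursive bijection nat^n -> nat. *)
Fixpoint tcode (s : seq nat) : nat :=
  match s with
  | [::] => 0
  | [:: x] => x
  | x :: xs => cpair x (tcode xs)
  end.

(* Canonical finite sets: D_u = { i | the i-th binary digit of u is 1 }. *)
Definition D (u : nat) (i : nat) : Prop := odd (u %/ 2 ^ i).

Inductive prcode : Type :=
| PZero : prcode                          (* constant 0, any arity *)
| PSucc : prcode
| PProj : nat -> prcode                   (* i-th projection (0-based) *)
| PComp : prcode -> seq prcode -> prcode
| PRec  : prcode -> prcode -> prcode
| PMu   : prcode -> prcode.

Inductive ev : prcode -> seq nat -> nat -> Prop :=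
| evZero xs : ev PZero xs 0
| evSucc x : ev PSucc [:: x] x.+1
| evProj i xs : i < size xs -> ev (PProj i) xs (nth 0 xs i)
| evComp f gs xs ys y : evs gs xs ys -> ev f ys y -> ev (PComp f gs) xs y
| evRec0 g h xs y : ev g xs y -> ev (PRec g h) (0 :: xs) y
| evRecS g h n xs z y :
    ev (PRec g h) (n :: xs) z -> ev h [:: n, z & xs] y ->
    ev (PRec g h) (n.+1 :: xs) y
| evMu f xs y :
    ev f (y :: xs) 0 ->
    (forall z, z < y -> exists w, ev f (z :: xs) w.+1) ->
    ev (PMu f) xs y
with evs : seq prcode -> seq nat -> seq nat -> Prop :=
| evsNil xs : evs [::] xs [::]
| evsCons g gs xs y ys : ev g xs y -> evs gs xs ys -> evs (g :: gs) xs (y :: ys).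

Definition prfun (k : nat) (c : prcode) : seq nat -> nat -> Prop :=
  fun xs y => size xs = k /\ ev c xs y.

Definition re_set (W : nat -> Prop) : Prop :=
  exists c : prcode, forall n, W n <-> exists y, ev c [:: n] y.

Definition ereducible (X Y : nat -> Prop) : Prop :=
  exists W : nat -> Prop, re_set W /\
    forall x, X x <-> exists u, W (tcode [:: x; u]) /\ (forall i, D u i -> Y i).

Definition set_compl (S : nat -> Prop) : nat -> Prop := fun n => ~ S n.

Definition join (A B : nat -> Prop) : nat -> Prop :=
  fun m => (~~ odd m /\ A m./2) \/ (odd m /\ B m./2).

(* A partial function N^k -> N is represented by its graph relation
   f : seq nat -> nat -> Prop, with f xs y meaning f(xs) is defined and = y. *)
Definition pfun := seq nat -> nat -> Prop.

Definition is_pfun (k : nat) (f : pfun) : Prop :=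
  (forall xs y, f xs y -> size xs = k) /\
  (forall xs y z, f xs y -> f xs z -> y = z).

Definition graph (f : pfun) : nat -> Prop :=
  fun n => exists xs y, f xs y /\ n = tcode (rcons xs y).

Definition inL (M : nat -> Prop) (k : nat) (f : pfun) : Prop :=
  1 <= k /\ is_pfun k f /\ ereducible (graph f) M.

Definition subst (f : pfun) (gs : seq pfun) : pfun :=
  fun xs y => exists ys : seq nat,
    size ys = size gs /\
    (forall i, i < size gs -> nth (fun _ _ => False) gs i xs (nth 0 ys i)) /\
    f ys y.

(* primitive recursion: F(0,x) = g(x), F(n+1,x) = h(n, F(n,x), x) *)
Definition primrec (g h : pfun) : pfun :=
  fun nxs y => exists n xs, nxs = n :: xs /\
    exists s : seq nat, size s = n.+1 /\ g xs (nth 0 s 0) /\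
      (forall i, i < n -> h [:: i, nth 0 s i & xs] (nth 0 s i.+1)) /\
      nth 0 s n = y.

Definition mu (f : pfun) : pfun :=
  fun xs y => f (y :: xs) 0 /\
    (forall z, z < y -> exists w, f (z :: xs) w /\ w <> 0).

Definition indicator (R : nat -> Prop) : pfun :=
  fun xs y => exists n, xs = [:: n] /\ ((R n /\ y = 1) \/ (~ R n /\ y = 0)).

(* Applying (2) to the function that is 0 exactly on M writes M as the image alpha(R).
   Put S = {<m, x> | m in R, alpha(m) = x}.  Then x is in M iff 2<m, x> is in S (+) ~S for
   some m, so M <=e S (+) ~S.  Conversely the indicator of S lies in L: compute the indicator
   of R at m first and evaluate alpha(m) only when it is 1.  Its graph is therefore
   enumeration reducible to M, and S (+) ~S is a recursive preimage of that graph. *)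

From mathcomp Require Import all_boot zify.
From Stdlib Require Import Classical.

Set Implicit Arguments.
Unset Strict Implicit.
Unset Printing Implicit Defensive.

Fixpoint ev_functional c xs y (H : ev c xs y) {struct H} :
  forall y', ev c xs y' -> y = y'
with evs_functional gs xs ys (H : evs gs xs ys) {struct H} :
  forall ys', evs gs xs ys' -> ys = ys'.
Proof.
- destruct H as [?|?|? ? _|? ? ? ? ? Hgs Hf|? ? ? ? Hg|? ? ? ? ? ? Hrec Hh|? ? y0 Hf Hlt];
    move=> y' H'.
  + by inversion H'.
  + by inversion H'.
  + by inversion H'.
  + inversion H' as [| | |? ? ? ? ? Hgs' Hf'| | |]; subst.
    by rewrite (evs_functional _ _ _ Hgs _ Hgs') in Hf; apply: ev_functional Hf _ Hf'.
  + inversion H' as [| | | |? ? ? ? Hg'| |]; subst; exact: ev_functional Hg _ Hg'.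
  + inversion H' as [| | | | |? ? ? ? ? ? Hrec' Hh'|]; subst.
    by rewrite (ev_functional _ _ _ Hrec _ Hrec') in Hh; apply: ev_functional Hh _ Hh'.
  + inversion H' as [| | | | | |? ? ? Hf' Hlt']; subst.
    case: (ltngtP y0 y') => [lt_y0y'|lt_y'y0|//].
    * by have [w /(ev_functional _ _ _ Hf)] := Hlt' _ lt_y0y'.
    * destruct (Hlt _ lt_y'y0) as [w Hw]; by have := ev_functional _ _ _ Hw _ Hf'.
- destruct H as [?|? ? ? ? ? Hg Hgs]; move=> ys' H';
    inversion H' as [|? ? ? ? ? Hg' Hgs']; subst => //.
  by rewrite (ev_functional _ _ _ Hg _ Hg') (evs_functional _ _ _ Hgs _ Hgs').
Qed.

Lemma ev_proj i xs y : i < size xs -> nth 0 xs i = y -> ev (PProj i) xs y.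
Proof. by move=> lt_i <-; apply: evProj. Qed.

Lemma ev_proj0 x xs : ev (PProj 0) (x :: xs) x. Proof. exact: ev_proj. Qed.
Lemma ev_proj1 x y xs : ev (PProj 1) [:: x, y & xs] y. Proof. exact: ev_proj. Qed.
Lemma ev_proj2 x y z xs : ev (PProj 2) [:: x, y, z & xs] z. Proof. exact: ev_proj. Qed.

Lemma ev_comp1 f g xs v y : ev g xs v -> ev f [:: v] y -> ev (PComp f [:: g]) xs y.
Proof. by move=> Hg Hf; apply: evComp Hf; do 2?constructor. Qed.

Lemma ev_comp2 f g1 g2 xs v1 v2 y :
  ev g1 xs v1 -> ev g2 xs v2 -> ev f [:: v1; v2] y -> ev (PComp f [:: g1; g2]) xs y.
Proof. by move=> Hg1 Hg2 Hf; apply: evComp Hf; do 3?constructor. Qed.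

Lemma ev_comp1_inv f g xs y :
  ev (PComp f [:: g]) xs y -> exists v, ev g xs v /\ ev f [:: v] y.
Proof.
move=> H; inversion H as [| | |f' gs xs' ys y' Hgs Hf| | |]; subst.
inversion Hgs as [|g' gs' xs' v vs Hg Hnil]; subst.
by inversion Hnil; subst; exists v.
Qed.

Definition c_one := PComp PSucc [:: PZero].
Lemma ev_one xs : ev c_one xs 1.
Proof. by apply: ev_comp1; constructor. Qed.

Definition c_add := PRec (PProj 0) (PComp PSucc [:: PProj 1]).
Lemma ev_add x y : ev c_add [:: x; y] (x + y).
Proof.
elim: x => [|x IH]; first by apply: evRec0; apply: ev_proj0.
by apply: evRecS IH _; apply: ev_comp1; [apply: ev_proj1 | constructor].
Qed.

Definition c_pred := PRec PZero (PProj 0).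
Lemma ev_pred n : ev c_pred [:: n] n.-1.
Proof.
elim: n => [|n IH]; first by apply: evRec0; constructor.
by apply: evRecS IH _; apply: ev_proj0.
Qed.

Definition c_sub := PComp (PRec (PProj 0) (PComp c_pred [:: PProj 1])) [:: PProj 1; PProj 0].
Lemma ev_sub x y : ev c_sub [:: x; y] (x - y).
Proof.
apply: ev_comp2; [exact: ev_proj1 | exact: ev_proj0 |].
elim: y => [|y IH]; first by apply: evRec0; rewrite subn0; apply: ev_proj0.
by apply: evRecS IH _; apply: ev_comp1; [apply: ev_proj1 | rewrite subnS; apply: ev_pred].
Qed.

Lemma ev_subE x y v : x - y = v -> ev c_sub [:: x; y] v.
Proof. by move=> <-; apply: ev_sub. Qed.

Fixpoint tri d := if d is d'.+1 then tri d' + d else 0.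

Lemma tri_double n : tri n * 2 = n * n.+1.
Proof. by elim: n => [|n IH] //=; nia. Qed.

Lemma leq_tri m n : m <= n -> tri m <= tri n.
Proof. by move/subnKC <-; elim: (n - m) => [|d IH]; rewrite ?addn0 // addnS /=; lia. Qed.

Lemma cpairE x y : cpair x y = tri (x + y) + y.
Proof. by rewrite /cpair -tri_double mulnK. Qed.

Definition c_tri := PRec PZero (PComp c_add [:: PProj 1; PComp PSucc [:: PProj 0]]).
Lemma ev_tri d : ev c_tri [:: d] (tri d).
Proof.
elim: d => [|d IH]; first by apply: evRec0; constructor.
apply: evRecS IH _; apply: ev_comp2 (ev_proj1 _ _ _) _ (ev_add _ _).
by apply: ev_comp1 (ev_proj0 _ _) _; constructor.
Qed.

Definition c_cpair :=
  PComp c_add [:: PComp c_tri [:: PComp c_add [:: PProj 0; PProj 1]]; PProj 1].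
Lemma ev_cpair x y : ev c_cpair [:: x; y] (cpair x y).
Proof.
rewrite cpairE; apply: ev_comp2; [| exact: ev_proj1 | exact: ev_add].
by apply: ev_comp1 (ev_tri _); apply: ev_comp2 (ev_proj0 _ _) (ev_proj1 _ _ _) (ev_add _ _).
Qed.

Definition c_gap :=
  PComp c_sub [:: PComp PSucc [:: PProj 1]; PComp c_tri [:: PComp PSucc [:: PProj 0]]].
Lemma ev_gap d p : ev c_gap [:: d; p] (p.+1 - tri d.+1).
Proof.
apply: ev_comp2 _ _ (ev_sub _ _); first by apply: ev_comp1 (ev_proj1 _ _ _) _; constructor.
by apply: ev_comp1 (ev_tri _); apply: ev_comp1 (ev_proj0 _ _) _; constructor.
Qed.

(* The diagonal [x + y] of [cpair x y] is the least [d] with [cpair x y < tri d.+1]. *)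
Definition c_diag := PMu c_gap.
Lemma ev_diag x y : ev c_diag [:: cpair x y] (x + y).
Proof.
apply: evMu; first by have := ev_gap (x + y) (cpair x y); rewrite cpairE /=; congr ev; lia.
move=> d lt_d; exists ((cpair x y).+1 - tri d.+1).-1; have := ev_gap d (cpair x y); congr ev.
by have := leq_tri lt_d; rewrite cpairE; lia.
Qed.

Definition c_snd := PComp c_sub [:: PProj 0; PComp c_tri [:: c_diag]].
Lemma ev_snd x y : ev c_snd [:: cpair x y] y.
Proof.
apply: ev_comp2; [exact: ev_proj0 | exact: ev_comp1 (ev_diag x y) (ev_tri _) |].
by apply: ev_subE; rewrite cpairE addKn.
Qed.

Definition c_fst := PComp c_sub [:: c_diag; c_snd].
Lemma ev_fst x y : ev c_fst [:: cpair x y] x.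
Proof. by apply: ev_comp2 (ev_diag x y) (ev_snd x y) _; apply: ev_subE; rewrite addnK. Qed.

Lemma cpair_inj x y x' y' : cpair x y = cpair x' y' -> x = x' /\ y = y'.
Proof.
move=> E; split.
  by have := ev_fst x y; rewrite E => /ev_functional; apply; apply: ev_fst.
by have := ev_snd x y; rewrite E => /ev_functional; apply; apply: ev_snd.
Qed.

(* Inverse of [cpair], walking the anti-diagonals in the order [cpair] numbers them. *)
Fixpoint unpair (p : nat) : nat * nat :=
  if p is p'.+1 then
    let: (x, y) := unpair p' in if x is x'.+1 then (x', y.+1) else (y.+1, 0)
  else (0, 0).

Lemma unpairK p : cpair (unpair p).1 (unpair p).2 = p.
Proof.
elim: p => [|p] //=; case: (unpair p) => [[|x] y] /= <-; rewrite !cpairE.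
  by rewrite add0n !addn0 /= addnS.
by rewrite addnS addSn addnS.
Qed.

Lemma cpairK x y : unpair (cpair x y) = (x, y).
Proof.
by have := unpairK (cpair x y); case: (unpair _) => a b /= /cpair_inj [-> ->].
Qed.

Lemma ev_unpair1 p : ev c_fst [:: p] (unpair p).1.
Proof. by rewrite -{1}(unpairK p); apply: ev_fst. Qed.

Lemma ev_unpair2 p : ev c_snd [:: p] (unpair p).2.
Proof. by rewrite -{1}(unpairK p); apply: ev_snd. Qed.

Definition c_odd := PRec PZero (PComp c_sub [:: c_one; PProj 1]).
Lemma ev_odd n : ev c_odd [:: n] (odd n).
Proof.
elim: n => [|n IH]; first by apply: evRec0; constructor.
apply: evRecS IH _; apply: ev_comp2 (ev_one _) (ev_proj1 _ _ _) _.
by apply: ev_subE; rewrite /=; case: (odd n).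
Qed.

Definition c_even := PComp c_sub [:: c_one; c_odd].
Lemma ev_even n : ev c_even [:: n] (~~ odd n).
Proof. by apply: ev_comp2 (ev_one _) (ev_odd n) _; apply: ev_subE; case: (odd n). Qed.

Definition c_half := PRec PZero (PComp c_add [:: PProj 1; PComp c_odd [:: PProj 0]]).
Lemma ev_half n : ev c_half [:: n] n./2.
Proof.
elim: n => [|n IH]; first by apply: evRec0; constructor.
apply: evRecS IH _; apply: ev_comp2 (ev_proj1 _ _ _) (ev_comp1 (ev_proj0 _ _) (ev_odd n)) _.
by rewrite /= uphalf_half addnC; apply: ev_add.
Qed.

Definition c_pow2 := PRec c_one (PComp c_add [:: PProj 1; PProj 1]).
Lemma ev_pow2 n : ev c_pow2 [:: n] (2 ^ n).
Proof.
elim: n => [|n IH]; first by apply: evRec0; apply: ev_one.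
apply: evRecS IH _; apply: ev_comp2 (ev_proj1 _ _ _) (ev_proj1 _ _ _) _.
by rewrite expnS mul2n -addnn; apply: ev_add.
Qed.

Definition c_eq :=
  PComp c_sub [:: c_one; PComp c_add [:: c_sub; PComp c_sub [:: PProj 1; PProj 0]]].
Lemma ev_eq a b : ev c_eq [:: a; b] (a == b).
Proof.
have ev_dist : ev (PComp c_add [:: c_sub; PComp c_sub [:: PProj 1; PProj 0]]) [:: a; b]
                  ((a - b) + (b - a)).
  exact: ev_comp2 (ev_sub a b) (ev_comp2 (ev_proj1 _ _ _) (ev_proj0 _ _) (ev_sub b a)) (ev_add _ _).
apply: ev_comp2 (ev_one _) ev_dist _; apply: ev_subE.
by case: eqVneq => [->|]; rewrite ?subnn //; lia.
Qed.

Definition c_neq := PComp c_sub [:: c_one; c_eq].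
Lemma ev_neq a b : ev c_neq [:: a; b] (a != b).
Proof. by apply: ev_comp2 (ev_one _) (ev_eq a b) _; apply: ev_subE; case: (a == b). Qed.

Lemma D_pow2 x i : D (2 ^ x) i <-> i = x.
Proof.
rewrite /D; case: (ltnP x i) => [lt_xi|le_ix].
  by rewrite divn_small ?ltn_exp2l //; split=> // E; lia.
rewrite -expnB // oddX orbF; split=> [/eqP|->]; [lia | by rewrite subnn].
Qed.

Lemma re_set_exists (t : prcode) (r : nat -> nat -> nat) :
  (forall m q, ev t [:: m; q] (r m q)) -> re_set (fun q => exists m, r m q = 0).
Proof.
move=> ev_t; exists (PMu t) => q; split=> [[m0 r_m0]|[m Hmu]].
  have [m /eqP r_m min_m] := ex_minnP (ex_intro (fun m => r m q == 0) m0 (introT eqP r_m0)).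
  exists m; apply: evMu; first by rewrite -r_m.
  move=> z lt_zm; exists (r z q).-1; rewrite prednK ?ev_t // lt0n.
  by apply: contraTN lt_zm => /min_m; rewrite -leqNgt.
exists m; inversion Hmu as [| | | | | |? ? ? Hm _]; exact (ev_functional (ev_t m q) Hm).
Qed.

Lemma re_set_comap (W : nat -> Prop) (h : nat -> nat) (c : prcode) :
  (forall n, ev c [:: n] (h n)) -> re_set W -> re_set (fun n => W (h n)).
Proof.
move=> ev_c [cW HW]; exists (PComp cW [:: c]) => n; rewrite HW.
split=> [[y Hy]|[y /ev_comp1_inv [v [/(ev_functional (ev_c n)) <- Hy]]]]; exists y => //.
exact: ev_comp1 (ev_c n) Hy.
Qed.

(* The enumeration operator asks for the one-element finite set [D (2 ^ h m n)]. *)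
Lemma ereducible_search (X Y : nat -> Prop) (r h : nat -> nat -> nat) (cr ch : prcode) :
  (forall m n, ev cr [:: m; n] (r m n)) -> (forall m n, ev ch [:: m; n] (h m n)) ->
  (forall n, X n <-> exists m, r m n = 0 /\ Y (h m n)) -> ereducible X Y.
Proof.
move=> ev_r ev_h X_search.
pose test m q := r m (unpair q).1 + ((unpair q).2 != 2 ^ h m (unpair q).1).
exists (fun q => exists m, test m q = 0); split.
  pose fst1 := PComp c_fst [:: PProj 1].
  apply: (@re_set_exists (PComp c_add [:: PComp cr [:: PProj 0; fst1];
    PComp c_neq [:: PComp c_snd [:: PProj 1]; PComp c_pow2 [:: PComp ch [:: PProj 0; fst1]]]]))
    => m q.
  have ev_fst1 : ev fst1 [:: m; q] (unpair q).1 by exact: ev_comp1 (ev_proj1 _ _ _) (ev_unpair1 q).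
  apply: ev_comp2 (ev_comp2 (ev_proj0 _ _) ev_fst1 (ev_r _ _)) _ (ev_add _ _).
  apply: ev_comp2 (ev_comp1 (ev_proj1 _ _ _) (ev_unpair2 q)) _ (ev_neq _ _).
  exact: ev_comp1 (ev_comp2 (ev_proj0 _ _) ev_fst1 (ev_h _ _)) (ev_pow2 _).
move=> n; rewrite X_search /test /=; split=> [[m [r0 Yh]]|[u [[m] test0 DY]]].
  by exists (2 ^ h m n); split; [exists m; rewrite cpairK /= r0 eqxx | move=> i /D_pow2 ->].
move: test0; rewrite cpairK /= => /eqP; rewrite addn_eq0 eqb0 negbK => /andP [/eqP r0 /eqP u_pow2].
by exists m; split=> //; apply: DY; rewrite u_pow2; apply/D_pow2.
Qed.

Lemma ereducible_comap (X X' Y : nat -> Prop) (h : nat -> nat) (c : prcode) :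
  (forall n, ev c [:: n] (h n)) -> (forall n, X' n <-> X (h n)) ->
  ereducible X Y -> ereducible X' Y.
Proof.
move=> ev_h X'E [W [reW XE]].
exists (fun q => W (cpair (h (unpair q).1) (unpair q).2)); split.
  apply: re_set_comap reW => q.
  exact: ev_comp2 (ev_comp1 (ev_unpair1 q) (ev_h _)) (ev_unpair2 q) (ev_cpair _ _).
by move=> n; rewrite X'E XE /=; split=> -[u Hu]; exists u; rewrite cpairK in Hu *.
Qed.

Lemma inL_ext (M : nat -> Prop) k (f g : pfun) :
  (forall xs y, f xs y <-> g xs y) -> inL M k f -> inL M k g.
Proof.
move=> fg [k_gt0 [[f_size f_fun] [W [reW fE]]]]; split=> //; split.
  by split=> [xs y /fg /f_size | xs y z /fg f_y /fg /(f_fun _ _ _ f_y)].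
exists W; split=> // n; rewrite -fE /graph.
by split=> -[xs [y [Hxy ->]]]; exists xs, y; split=> //; apply/fg.
Qed.

Lemma is_pfun_ext k (f g : pfun) :
  is_pfun k f -> is_pfun k g -> (forall xs, size xs = k -> exists v, f xs v /\ g xs v) ->
  forall xs y, f xs y <-> g xs y.
Proof.
move=> [f_size f_fun] [g_size g_fun] common xs y.
split=> [f_y | g_y]; [have [v [f_v g_v]] := common _ (f_size _ _ f_y)
                     | have [v [f_v g_v]] := common _ (g_size _ _ g_y)].
  by rewrite (f_fun _ _ _ f_y f_v).
by rewrite (g_fun _ _ _ g_y g_v).
Qed.

Lemma indicator_pfun (R : nat -> Prop) : is_pfun 1 (indicator R).
Proof.
split=> [xs y [n [-> _]] // | xs y z [n [-> Hy]] [_ [[<-] Hz]]].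
by case: Hy Hz => -[Rn ->] [] [Rn' ->].
Qed.

Lemma graph_cpair (f : pfun) n y : is_pfun 1 f -> graph f (cpair n y) <-> f [:: n] y.
Proof.
move=> [f_size _]; split=> [[xs [v [f_v]]] | f_y]; last by exists [:: n], y.
by case: xs f_v (f_size _ _ f_v) => [|a [|]] // f_v _ /= /cpair_inj [-> ->].
Qed.

Lemma subst1_intro (f g1 : pfun) xs a y : g1 xs a -> f [:: a] y -> subst f [:: g1] xs y.
Proof. by move=> g1_a f_y; exists [:: a]; split=> //; split=> // -[]. Qed.

Lemma subst2_intro (f g1 g2 : pfun) xs a b y :
  g1 xs a -> g2 xs b -> f [:: a; b] y -> subst f [:: g1; g2] xs y.
Proof. by move=> g1_a g2_b f_y; exists [:: a; b]; split=> //; split=> // -[|[]]. Qed.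

Lemma subst3_intro (f g1 g2 g3 : pfun) xs a b c y :
  g1 xs a -> g2 xs b -> g3 xs c -> f [:: a; b; c] y -> subst f [:: g1; g2; g3] xs y.
Proof. by move=> g1_a g2_b g3_c f_y; exists [:: a; b; c]; split=> //; split=> // -[|[|[]]]. Qed.

Lemma primrec0_intro (g h : pfun) xs y : g xs y -> primrec g h (0 :: xs) y.
Proof. by move=> g_y; exists 0, xs; split=> //; exists [:: y]. Qed.

Lemma primrec1_intro (g h : pfun) xs z y :
  g xs z -> h [:: 0, z & xs] y -> primrec g h (1 :: xs) y.
Proof. by move=> g_z h_y; exists 1, xs; split=> //; exists [:: z; y]; do 3!split=> //; case. Qed.

Definition zero_on (X : nat -> Prop) : pfun :=
  fun xs y => exists x, xs = [:: x] /\ X x /\ y = 0.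

Lemma inL_zero_on (M : nat -> Prop) : inL M 1 (zero_on M).
Proof.
split=> //; split.
  by split=> [xs y [x [-> _]] // | xs y z [x [_ [_ ->]]] [x' [_ [_ ->]]]].
apply: (@ereducible_search _ _ (fun m n => n != cpair m 0) (fun m _ => m)
          (PComp c_neq [:: PProj 1; PComp c_cpair [:: PProj 0; PZero]]) (PProj 0)).
- move=> m n.
  exact: ev_comp2 (ev_proj1 _ _ _) (ev_comp2 (ev_proj0 _ _) (evZero _) (ev_cpair _ _)) (ev_neq _ _).
- by move=> m n; apply: ev_proj0.
- move=> n; split=> [[_ [_ [[x [-> [Mx ->]]] ->]]] | [m [/eqP]]].
    by exists x; rewrite /= eqxx.
  by rewrite eqb0 negbK => /eqP -> Mm; exists [:: m], 0; split=> //; exists m.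
Qed.

Lemma zero_on_range (X R : nat -> Prop) (alpha omega : pfun) :
  (forall m, R m -> exists y, omega [:: m] y) ->
  (forall x y, zero_on X [:: x] y <-> exists m, R m /\ alpha [:: m] x /\ omega [:: m] y) ->
  forall x, X x <-> exists m, R m /\ alpha [:: m] x.
Proof.
move=> omega_dom repr x; split=> [Xx | [m [Rm alpha_x]]].
  have [m [Rm [alpha_x _]]] := (repr x 0).1 (ex_intro _ x (conj erefl (conj Xx erefl))).
  by exists m.
have [y omega_y] := omega_dom m Rm.
by have [_ [[<-] [Xx _]]] := (repr x y).2 (ex_intro _ m (conj Rm (conj alpha_x omega_y))).
Qed.

Lemma ereducible_exists_join (X S : nat -> Prop) :
  (forall x, X x <-> exists m, S (cpair m x)) -> ereducible X (join S (set_compl S)).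
Proof.
move=> XE; apply: (@ereducible_search _ _ (fun _ _ => 0) (fun m x => (cpair m x).*2)
                     PZero (PComp c_add [:: c_cpair; c_cpair])).
- by move=> m x; apply: evZero.
- by move=> m x; rewrite -addnn; apply: ev_comp2 (ev_cpair _ _) (ev_cpair _ _) (ev_add _ _).
- move=> x; rewrite XE /join; split=> -[m Hm]; exists m; move: Hm; rewrite odd_double doubleK /=.
  + by move=> Sm; split=> //; left.
  + by case=> _ [[]|[]].
Qed.

Lemma ereducible_join_indicator (M S : nat -> Prop) :
  inL M 1 (indicator S) -> ereducible (join S (set_compl S)) M.
Proof.
move=> [_ [ind_pfun ind_red]].
apply: (@ereducible_comap _ _ _ (fun z => cpair z./2 (~~ odd z))
          (PComp c_cpair [:: c_half; c_even])) ind_red.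
  by move=> z; apply: ev_comp2 (ev_half z) (ev_even z) (ev_cpair _ _).
move=> z; rewrite graph_cpair // /join /set_compl; case: (odd z) => /=.
  split=> [[[//]|[_ notS]] | [_ [[<-] [[_ //]|[notS _]]]]]; last by right.
  by exists z./2; split=> //; right.
split=> [[[_ Sz]|[//]] | [_ [[<-] [[Sz _]|[_ //]]]]]; last by left.
by exists z./2; split=> //; left.
Qed.

Definition graph_on (R : nat -> Prop) (alpha : pfun) : nat -> Prop :=
  fun n => R (unpair n).1 /\ alpha [:: (unpair n).1] (unpair n).2.

Section ClosedClass.

Variable M : nat -> Prop.
Hypothesis inL_prfun : forall (k : nat) (c : prcode), 1 <= k -> inL M k (prfun k c).
Hypothesis inL_subst : forall (m k : nat) (f : pfun) (gs : seq pfun),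
  1 <= k -> inL M m f -> size gs = m ->
  (forall i, i < m -> inL M k (nth (fun _ _ => False) gs i)) -> inL M k (subst f gs).
Hypothesis inL_primrec : forall (k : nat) (g h : pfun),
  inL M k g -> inL M k.+2 h -> inL M k.+1 (primrec g h).

Lemma inL_indicator_graph_on (R : nat -> Prop) (alpha : pfun) :
  inL M 1 alpha -> inL M 1 (indicator R) -> (forall m, R m -> exists y, alpha [:: m] y) ->
  inL M 1 (indicator (graph_on R alpha)).
Proof.
move=> inL_alpha inL_R alpha_dom.
(* Primitive recursion on the bit [indicator R m] evaluates [alpha m] only when [m] is in [R],
   where it is defined: [G 0 m x = 0] and [G 1 m x = (alpha m == x)]. *)
pose eq_step := subst (prfun 2 c_eq) [:: subst alpha [:: prfun 4 (PProj 2)]; prfun 4 (PProj 3)].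
pose G := primrec (prfun 2 PZero) eq_step.
pose g := subst G [:: subst (indicator R) [:: prfun 1 c_fst]; prfun 1 c_fst; prfun 1 c_snd].
have inL_g : inL M 1 g.
  have inL_eq_step : inL M 4 eq_step.
    apply: inL_subst (inL_prfun _ _) _ _ => // -[|[|i]] //= _; last exact: inL_prfun.
    by apply: inL_subst inL_alpha _ _ => // -[|i] //= _; apply: inL_prfun.
  apply: inL_subst (inL_primrec (inL_prfun _ _) inL_eq_step) _ _ => // -[|[|[|i]]] //= _;
    try exact: inL_prfun.
  by apply: inL_subst inL_R _ _ => // -[|i] //= _; apply: inL_prfun.
have [_ [g_pfun _]] := inL_g; have [_ [[_ alpha_fun] _]] := inL_alpha.
apply: inL_ext inL_g; apply: is_pfun_ext g_pfun (indicator_pfun _) _.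
case=> [|n [|]] // _; case E: (unpair n) => [m x].
have fst_n : prfun 1 c_fst [:: n] m by split=> //; rewrite -[m]/((m, x).1) -E; apply: ev_unpair1.
have snd_n : prfun 1 c_snd [:: n] x by split=> //; rewrite -[x]/((m, x).2) -E; apply: ev_unpair2.
have graph_onE : graph_on R alpha n <-> R m /\ alpha [:: m] x by rewrite /graph_on E.
have [Rm | notRm] := classic (R m).
  have [a alpha_a] := alpha_dom m Rm.
  exists (a == x); split.
    apply: (subst3_intro (a := 1) _ fst_n snd_n).
      by apply: subst1_intro fst_n _; exists m; split=> //; left.
    apply: primrec1_intro; first by split=> //; apply: evZero.
    apply: (subst2_intro (a := a) (b := x)); last by split=> //; apply: ev_eq.
      by apply: subst1_intro alpha_a; split=> //; apply: ev_proj2.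
    by split=> //; apply: ev_proj.
  exists n; split=> //; rewrite graph_onE; case: eqVneq => [<- | ne_ax]; first by left.
  by right; split=> // -[_ /(alpha_fun _ _ _ alpha_a) eq_ax]; move: ne_ax; rewrite eq_ax eqxx.
exists 0; split.
  apply: (subst3_intro (a := 0) _ fst_n snd_n).
    by apply: subst1_intro fst_n _; exists m; split=> //; right.
  by apply: primrec0_intro; split=> //; apply: evZero.
by exists n; split=> //; right; rewrite graph_onE; split=> // -[].
Qed.

End ClosedClass.

Theorem lemma2 (M : nat -> Prop) :
  (* (1) recursive functions and closure properties *)
  (forall (k : nat) (c : prcode), 1 <= k -> inL M k (prfun k c)) ->
  (forall (m k : nat) (f : pfun) (gs : seq pfun),
      1 <= k -> inL M m f -> size gs = m ->
      (forall i, i < m -> inL M k (nth (fun _ _ => False) gs i)) ->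
      inL M k (subst f gs)) ->
  (forall (k : nat) (g h : pfun),
      inL M k g -> inL M k.+2 h -> inL M k.+1 (primrec g h)) ->
  (forall (k : nat) (f : pfun),
      1 <= k -> inL M k.+1 f -> inL M k (mu f)) ->
  (* (2) representation of unary functions via a set R *)
  (forall f : pfun, inL M 1 f ->
      exists (R : nat -> Prop) (alpha omega : pfun),
        inL M 1 alpha /\ inL M 1 omega /\
        (forall m, R m -> exists y, alpha [:: m] y) /\
        (forall m, R m -> exists y, omega [:: m] y) /\
        inL M 1 (indicator R) /\
        (forall x y, f [:: x] y <->
           exists m, R m /\ alpha [:: m] x /\ omega [:: m] y)) ->
  (* (3) a universal binary function *)
  (exists F : pfun, inL M 2 F /\
      forall f : pfun, inL M 1 f ->
        exists n, forall x y, F [:: n; x] y <-> f [:: x] y) ->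
  exists S : nat -> Prop,
    ereducible M (join S (set_compl S)) /\ ereducible (join S (set_compl S)) M.
Proof.
move=> inL_prfun inL_subst inL_primrec _ repr _.
have [R [alpha [omega [inL_alpha [_ [alpha_dom [omega_dom [inL_R reprE]]]]]]]] :=
  repr _ (inL_zero_on M).
have M_range := zero_on_range omega_dom reprE.
exists (graph_on R alpha); split.
  apply: ereducible_exists_join => x; rewrite M_range.
  by split=> -[m Hm]; exists m; move: Hm; rewrite /graph_on cpairK.
apply: ereducible_join_indicator.
by apply: inL_indicator_graph_on.
Qed.
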